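(* Let $F$ be a Fano manifold and let $\lambda$ be an eigenvalue of $(c_1(F)\star_0)$ on $H^{(0)}$ of multiplicity one. Then $\lambda$ is not an eigenvalue of $(c_1(F)\star_0)$ on $H^{(j)}$ for any $j\neq0$.
   Context: $\star_0$ is the small quantum product on the full cohomology $H^\bullet(F,\mathbb C)$ (supercommutative, with Poincaré pairing $(\cdot,\cdot)$ satisfying the Frobenius property). $H^{(j)}=\bigoplus_{p-q=j}H^{p,q}(F)$; each $H^{(j)}$ is preserved by $(c_1(F)\star_0)$ and $H^{(j)}\star_0H^{(k)}\subset H^{(j+k)}$. *)

From HB Require Import structures.
From mathcomp Require Import all_boot all_order all_algebra.
Set Implicit Arguments. Unset Strict Implicit. Unset Printing Implicit Defensive.
Import Order.TTheory GRing.Theory Num.Theory.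
Local Open Scope ring_scope.

(* Abstract model of (H^*(F,C), star_0, Poincare pairing, Hodge-type grading
   H^(j) = (+)_{p-q=j} H^{p,q}, c_1(F)) for a Fano manifold F of complex
   dimension n.  Parity of cohomological degree p+q equals parity of j = p-q,
   so super-commutativity is expressed via j. *)
Record qcoh_axioms (K : numClosedFieldType) (H : vectType K)
    (mul : H -> H -> H) (one : H) (pair : H -> H -> K)
    (n : nat) (Hj : int -> {vspace H}) (c1 : H) : Prop := QCohAxioms {
  mul_linl : forall (k : K) (a b c : H), mul (k *: a + b) c = k *: mul a c + mul b c;
  mul_linr : forall (k : K) (a b c : H), mul a (k *: b + c) = k *: mul a b + mul a c;
  mulA : forall a b c, mul a (mul b c) = mul (mul a b) c;
  mul1l : forall a, mul one a = a;
  mul1r : forall a, mul a one = a;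
  Hj_sum : (\sum_(i < n.*2.+1) Hj (i%:Z - n%:Z))%VS = fullv;
  Hj_direct : directv (\sum_(i < n.*2.+1) Hj (i%:Z - n%:Z))%VS;
  Hj_out : forall j : int, (n%:Z < `|j|) -> Hj j = 0%VS;
  mul_graded : forall (j k : int) a b, a \in Hj j -> b \in Hj k -> mul a b \in Hj (j + k);
  mul_supercomm : forall (j k : int) a b, a \in Hj j -> b \in Hj k ->
      mul a b = (-1) ^+ (`|j|%N * `|k|%N) *: mul b a;
  one_H0 : one \in Hj 0;
  c1_H0 : c1 \in Hj 0;
  pair_linl : forall (k : K) (a b c : H), pair (k *: a + b) c = k * pair a c + pair b c;
  pair_linr : forall (k : K) (a b c : H), pair a (k *: b + c) = k * pair a b + pair a c;
  pair_nondeg : forall a, (forall b, pair a b = 0) -> a = 0;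
  pair_frob : forall a b c, pair (mul a b) c = pair a (mul b c);
  pair_graded : forall (j k : int) a b, a \in Hj j -> b \in Hj k -> j + k != 0 ->
      pair a b = 0
}.

(* v is a generalized eigenvector (or 0) of f for lam:  (f - lam)^N v = 0,
   with N = dim H (which suffices for the generalized eigenspace). *)
Definition gen_eig_vec (K : fieldType) (H : vectType K) (f : H -> H) (lam : K) (v : H) : Prop :=
  iter (\dim (fullv : {vspace H})) (fun x => f x - lam *: x) v = 0.

(* lam has (algebraic) multiplicity one as an eigenvalue of f restricted to U:
   the generalized lam-eigenspace of f in U is one-dimensional. *)
Definition mult_one_on (K : fieldType) (H : vectType K) (U : {vspace H}) (f : H -> H) (lam : K) : Prop :=
  exists e : H, [/\ e \in U, e != 0, gen_eig_vec f lam e &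
    forall v, v \in U -> gen_eig_vec f lam v -> exists k : K, v = k *: e].

Definition eigenvalue_on (K : fieldType) (H : vectType K) (U : {vspace H}) (f : H -> H) (lam : K) : Prop :=
  exists v : H, [/\ v \in U, v != 0 & f v = lam *: v].

From Pilot Require Import Defs.
From HB Require Import structures.
From mathcomp Require Import all_boot all_order all_algebra.
From mathcomp Require Import zify.
Set Implicit Arguments. Unset Strict Implicit. Unset Printing Implicit Defensive.
Import Order.TTheory GRing.Theory Num.Theory.
Local Open Scope ring_scope.

(* Let v in H^(j), j <> 0, satisfy c1 * v = lam v.  For w in H^(-j) the product
   u := v * w is a lam-eigenvector in H^(0), so by multiplicity one it spans the
   generalized lam-eigenspace of H^(0).  Then u * u = a u for some scalar a, and
   a = 0 because u is nilpotent: v^(n+1) lies in H^((n+1) j) = 0.  As c1 * _ is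
   self-adjoint, u is orthogonal to the image of c1 * _ - lam; the Fitting
   decomposition 1 = g + (c1 * _ - lam)^N s puts g in the generalized kernel,
   whose degree-0 component is a multiple of u.  Hence
   (v, w) = (u, 1) = (u, g) = 0 for all such w, and v = 0 by nondegeneracy. *)

Lemma dim_fullv0_eq0 (K : fieldType) (V : vectType K) (x : V) :
  \dim {:V} = 0%N -> x = 0.
Proof.
move=> /eqP; rewrite dimv_eq0 => /eqP full0.
by apply/eqP; rewrite -memv0 -full0 memvf.
Qed.

Section FittingDecomposition.
Variables (K : fieldType) (V : vectType K) (f : 'End(V)).
Local Notation N := (\dim {:V}).

Lemma iter_lfunB k x y : iter k f (x - y) = iter k f x - iter k f y.
Proof. by elim: k => //= k ->; rewrite linearB. Qed.

Lemma iter_lfun_sum (I : finType) k (xs : I -> V) :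
  iter k f (\sum_i xs i) = \sum_i iter k f (xs i).
Proof. by elim: k => //= k ->; rewrite linear_sum. Qed.

Definition iter_img k := iter k (lfun_img f) fullv.

Lemma memv_iter_img k x : iter k f x \in iter_img k.
Proof. by elim: k => [|k IH]; rewrite ?memvf // memv_img. Qed.

Lemma iter_imgP k v : v \in iter_img k -> exists s, v = iter k f s.
Proof.
elim: k v => [|k IH] v; first by exists v.
by case/memv_imgP => _ /IH[s ->] ->; exists s.
Qed.

Lemma iter_img_sub k : (iter_img k.+1 <= iter_img k)%VS.
Proof. by elim: k => [|k IH]; [apply: subvf | apply: limgS]. Qed.

Lemma iter_img_stable k m :
  iter_img k.+1 = iter_img k -> iter_img (m + k) = iter_img k.
Proof. by move=> stab_k; elim: m => //= m IH; rewrite IH. Qed.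

Lemma dim_iter_img_strict k :
    (forall i, (i < k)%N -> iter_img i.+1 != iter_img i) ->
  (\dim (iter_img k) + k <= N)%N.
Proof.
elim: k => [|k IH] strict; first by rewrite addn0 dimvS ?subvf.
have lt_k : (\dim (iter_img k.+1) < \dim (iter_img k))%N.
  by rewrite (ltn_leqif (dimv_leqif_eq (iter_img_sub k))) strict.
have := IH (fun i lt_ik => strict i (ltnW lt_ik)); lia.
Qed.

Lemma iter_img_dim_stable m : iter_img (m + N) = iter_img N.
Proof.
have [k le_kN stab_k] : exists2 k, (k <= N)%N & iter_img k.+1 = iter_img k.
  case: (boolP [exists i : 'I_N.+1, iter_img i.+1 == iter_img i]).
    by case/existsP => i /eqP stab_i; exists i; first exact: ltn_ord i.
  move/existsPn => unstable.
  have := @dim_iter_img_strict N.+1 (fun i lt_iN => unstable (Ordinal lt_iN)).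
  lia.
by rewrite -(subnK le_kN) addnA !iter_img_stable.
Qed.

Lemma fitting_decomposition (x : V) :
  exists s : V, iter N f (x - iter N f s) = 0.
Proof.
have : iter N f x \in iter_img (N + N).
  by rewrite iter_img_dim_stable memv_iter_img.
by case/iter_imgP => s Es; exists s; rewrite iter_lfunB -iterD -Es subrr.
Qed.

Lemma directv_iter_eq0 (I : finType) (Us : I -> {vspace V}) k (xs : I -> V) :
    directv (\sum_i Us i) -> (forall i x, x \in Us i -> f x \in Us i) ->
    (forall i, xs i \in Us i) -> iter k f (\sum_i xs i) = 0 ->
  forall i, iter k f (xs i) = 0.
Proof.
move=> /directv_sum_independent indep fUs xsUs; rewrite iter_lfun_sum.
move/indep => xs0 i; apply: xs0 => // {}i _.
by elim: k => //= k; apply: fUs.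
Qed.
End FittingDecomposition.

Section GradedFrobeniusAlgebra.
Variables (K : numClosedFieldType) (H : vectType K)
    (mul : H -> H -> H) (one : H) (pair : H -> H -> K)
    (n : nat) (Hj : int -> {vspace H}) (c1 : H).
Hypothesis ax : qcoh_axioms mul one pair n Hj c1.

Fact mulr_is_linear a : linear (mul a).
Proof. by move=> k x y; rewrite (mul_linr ax). Qed.
HB.instance Definition _ a :=
  GRing.isLinear.Build K H H *:%R (mul a) (mulr_is_linear a).

Fact pair_is_scalar a : scalar (pair a).
Proof. by move=> k x y; rewrite (pair_linr ax). Qed.
HB.instance Definition _ a :=
  GRing.isLinear.Build K H K *%R (pair a) (pair_is_scalar a).

Lemma mul0l a : mul 0 a = 0.
Proof. by have := mul_linl ax (-1) 0 0 a; rewrite !scaleN1r !addNr. Qed.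

Lemma mulZl a k x : mul (k *: x) a = k *: mul x a.
Proof. by rewrite -[k *: x]addr0 (mul_linl ax) mul0l addr0. Qed.

Lemma pair0l a : pair 0 a = 0.
Proof. by have := pair_linl ax (-1) 0 0 a; rewrite scaleN1r mulN1r !addNr. Qed.

Lemma pairZl a k x : pair (k *: x) a = k * pair x a.
Proof. by rewrite -[k *: x]addr0 (pair_linl ax) pair0l addr0. Qed.

Lemma pairE a b : pair a b = pair (mul a b) one.
Proof. by rewrite (pair_frob ax) (Defs.mul1r ax). Qed.

Lemma graded_decomposition b : exists2 bs : 'I_n.*2.+1 -> H,
  (forall i, bs i \in Hj (i%:Z - n%:Z)) & b = \sum_i bs i.
Proof.
have : b \in (\sum_(i < n.*2.+1) Hj (i%:Z - n%:Z))%VS.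
  by rewrite (Hj_sum ax) memvf.
by case/memv_sumP => bs bsH ->; exists bs => // i; apply: bsH.
Qed.

Lemma pair_homog_sum j u (bs : 'I_n.*2.+1 -> H) :
    u \in Hj j -> (forall i, bs i \in Hj (i%:Z - n%:Z)) ->
    (forall i : 'I_n.*2.+1, i%:Z - n%:Z = - j -> pair u (bs i) = 0) ->
  pair u (\sum_i bs i) = 0.
Proof.
move=> uH bsH bs_perp; rewrite linear_sum big1 // => i _.
have [/bs_perp // | deg_i] := eqVneq (i%:Z - n%:Z) (- j).
by apply: (pair_graded ax uH (bsH i)); rewrite addrC addr_eq0.
Qed.

Lemma pair_nondeg_homog j v :
  v \in Hj j -> (forall w, w \in Hj (- j) -> pair v w = 0) -> v = 0.
Proof.
move=> vH v_perp; apply: (pair_nondeg ax) => b.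
have [bs bsH ->] := graded_decomposition b.
by apply: (pair_homog_sum vH bsH) => i deg_i; apply: v_perp; rewrite -deg_i.
Qed.

Lemma mulc1_homog k x : x \in Hj k -> mul c1 x \in Hj k.
Proof. by move=> xH; have := mul_graded ax (c1_H0 ax) xH; rewrite add0r. Qed.

Lemma mulc1C k x : x \in Hj k -> mul c1 x = mul x c1.
Proof.
by move=> xH; rewrite (mul_supercomm ax (c1_H0 ax) xH) mul0n expr0 scale1r.
Qed.

Definition mul_pow x m := iter m (mul x) one.

Lemma mul_pow_homog j x m : x \in Hj j -> mul_pow x m \in Hj (j *+ m).
Proof.
move=> xH; elim: m => [|m IH]; first exact: (one_H0 ax).
by rewrite mulrS; apply: (mul_graded ax xH IH).
Qed.

Lemma mul_pow_mul j k v w m : v \in Hj j -> w \in Hj k ->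
  exists s : K, mul_pow (mul v w) m = s *: mul (mul_pow v m) (mul_pow w m).
Proof.
move=> vH wH; elim: m => [|m [s IH]].
  by exists 1; rewrite scale1r /= (Defs.mul1l ax).
rewrite /= IH linearZ /= -(Defs.mulA ax) (Defs.mulA ax w).
rewrite (mul_supercomm ax wH (mul_pow_homog m vH)) mulZl linearZ /=.
by rewrite -(Defs.mulA ax) (Defs.mulA ax v) scalerA; eexists.
Qed.

Lemma mul_pow_nilpotent j v : j != 0 -> v \in Hj j -> mul_pow v n.+1 = 0.
Proof.
move=> j0 vH; apply/eqP; rewrite -memv0 -(Hj_out ax (j := j *+ n.+1)).
  exact: mul_pow_homog.
rewrite normrMn -mulr_natr.
have : 0 < `|j| by rewrite normr_gt0.
nia.
Qed.

Section Eigenvalue.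
Variable lam : K.

Definition c1_shift : 'End(H) := (linfun (mul c1) - lam *: \1)%VF.

Lemma c1_shiftE x : c1_shift x = mul c1 x - lam *: x.
Proof. by rewrite add_lfunE opp_lfunE scale_lfunE id_lfunE lfunE. Qed.

Lemma gen_eig_vecE x :
  gen_eig_vec (mul c1) lam x <-> iter (\dim {:H}) c1_shift x = 0.
Proof. by rewrite /gen_eig_vec (eq_iter c1_shiftE). Qed.

Lemma c1_shift_homog k x : x \in Hj k -> c1_shift x \in Hj k.
Proof. by move=> xH; rewrite c1_shiftE memvB ?memvZ ?mulc1_homog. Qed.

Lemma eigvec_gen_eig x : mul c1 x = lam *: x -> gen_eig_vec (mul c1) lam x.
Proof.
move=> Ex; apply/gen_eig_vecE.
case dimH: (\dim {:H}) => [|N]; first exact: dim_fullv0_eq0.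
rewrite iterSr c1_shiftE Ex subrr.
by elim: N {dimH} => //= N ->; rewrite linear0.
Qed.

Lemma pair_eigvec_c1_shift u y : u \in Hj 0 -> mul c1 u = lam *: u ->
  pair u (c1_shift y) = 0.
Proof.
move=> uH Eu; rewrite c1_shiftE linearB linearZ /= -(pair_frob ax).
by rewrite -(mulc1C uH) Eu pairZl subrr.
Qed.

Hypothesis hlam : mult_one_on (Hj 0) (mul c1) lam.

Lemma gen_eig_line u : u \in Hj 0 -> u != 0 -> mul c1 u = lam *: u ->
  forall x, x \in Hj 0 -> gen_eig_vec (mul c1) lam x ->
  exists c : K, x = c *: u.
Proof.
have [e [_ _ _ e_span]] := hlam.
move=> uH u0 Eu x xH /(e_span x xH)[k ->].
have [k' Eu'] := e_span u uH (eigvec_gen_eig Eu).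
have k'0 : k' != 0 by apply: contraNneq u0 => k'0; rewrite Eu' k'0 scale0r.
by exists (k / k'); rewrite Eu' scalerA mulrVK // unitfE.
Qed.

Lemma eigvec_square_eq0 u m : u \in Hj 0 -> mul c1 u = lam *: u ->
  mul_pow u m.+1 = 0 -> mul u u = 0.
Proof.
move=> uH Eu um0; have [->|u0] := eqVneq u 0; first exact: mul0l.
have uuH : mul u u \in Hj 0 by have := mul_graded ax uH uH; rewrite addr0.
have [al Eal] : exists al : K, mul u u = al *: u.
  apply: (gen_eig_line uH u0 Eu uuH); apply: eigvec_gen_eig.
  by rewrite (Defs.mulA ax) Eu mulZl.
have pow_u k : mul_pow u k.+1 = al ^+ k *: u.
  elim: k => [|k IH]; first by rewrite /= (Defs.mul1r ax) scale1r.
  by rewrite -[LHS]/(mul u (mul_pow u k.+1)) IH linearZ /= Eal scalerA exprSr.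
have al0 : al = 0.
  move: um0; rewrite pow_u => /eqP; rewrite scaler_eq0 (negbTE u0) orbF.
  by rewrite expf_eq0 => /andP[_ /eqP].
by rewrite Eal al0 scale0r.
Qed.

Lemma pair_one_eigvec u : u \in Hj 0 -> mul c1 u = lam *: u ->
  mul u u = 0 -> pair u one = 0.
Proof.
move=> uH Eu uu0; have [->|u0] := eqVneq u 0; first exact: pair0l.
have u_perp_gen x : x \in Hj 0 -> gen_eig_vec (mul c1) lam x -> pair u x = 0.
  move=> xH /(gen_eig_line uH u0 Eu xH)[c ->].
  by rewrite linearZ /= pairE uu0 pair0l mulr0.
have [s fit_one] := fitting_decomposition c1_shift one.
have [gs gsH gsE] := graded_decomposition (one - iter (\dim {:H}) c1_shift s).
have -> : pair u one = pair u (\sum_i gs i).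
  rewrite -gsE linearB /=.
  case dimH: (\dim {:H}) => [|N].
    by rewrite (dim_fullv0_eq0 u dimH) eqxx in u0.
  by rewrite iterS (pair_eigvec_c1_shift _ uH Eu) subr0.
apply: (pair_homog_sum uH gsH) => i deg_i.
apply: u_perp_gen; first by rewrite -oppr0 -deg_i.
apply/gen_eig_vecE; apply: (directv_iter_eq0 (Hj_direct ax) _ gsH).
  by move=> i' x; apply: c1_shift_homog.
by rewrite -gsE.
Qed.

Lemma eigvec_homog_eq0 j v :
  j != 0 -> v \in Hj j -> mul c1 v = lam *: v -> v = 0.
Proof.
move=> j0 vH Ev; apply: (pair_nondeg_homog vH) => w wH.
have uH : mul v w \in Hj 0 by have := mul_graded ax vH wH; rewrite addrN.
have Eu : mul c1 (mul v w) = lam *: mul v w.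
  by rewrite (Defs.mulA ax) Ev mulZl.
rewrite pairE; apply: (pair_one_eigvec uH Eu).
apply: (eigvec_square_eq0 (m := n) uH Eu).
have [s ->] := mul_pow_mul n.+1 vH wH.
by rewrite (mul_pow_nilpotent j0 vH) mul0l scaler0.
Qed.
End Eigenvalue.
End GradedFrobeniusAlgebra.

Theorem mainTheorem20 (K : numClosedFieldType) (H : vectType K)
    (mul : H -> H -> H) (one : H) (pair : H -> H -> K)
    (n : nat) (Hj : int -> {vspace H}) (c1 : H)
    (ax : qcoh_axioms mul one pair n Hj c1)
    (lam : K) (hlam : mult_one_on (Hj 0) (mul c1) lam) :
  forall j : int, j != 0 -> ~ eigenvalue_on (Hj j) (mul c1) lam.
Proof.
move=> j j0 [v [vH v0 Ev]].
by move/eqP: v0; apply; apply: (eigvec_homog_eq0 ax hlam j0 vH Ev).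
Qed.
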